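(* Let $\alpha$ be an ordinal and let $X$ be a metric space with $X=\bigcup_{i\in I}X_i$. Suppose that $\{X_i\}_{i\in I}\in\mathfrak{C}_\alpha$ and that for every $r>0$ there is a subspace $Y(r)\subset X$ such that the collection $\{X_i\setminus Y(r)\}_{i\in I}$ is $r$-disjoint, where moreover $\{Y(r)\}_{r>0}\in\mathfrak{C}_\alpha$. Then $\{X\}\in\mathfrak{C}_\alpha$.
   Context: A family $\mathcal{U}$ of metric subspaces of a metric space $(X,d)$ is $r$-disjoint if $d(x,y)>r$ whenever $x\in U$, $y\in U'$, $U\neq U'$ in $\mathcal{U}$. For families $\mathcal{X},\mathcal{Y}$ and $R\in\mathbb{R}^{\mathbb{N}}$, $\mathcal{X}\xrightarrow{R}\mathcal{Y}$ means: there is an integer $k$ such that for each $X\in\mathcal{X}$ there are subcollections $\mathcal{U}_1,\dots,\mathcal{U}_k\subseteq\mathcal{Y}$ of subspaces of $X$, each $\mathcal{U}_i$ being $R_i$-disjoint, with $\bigcup_i\mathcal{U}_i$ covering $X$. A family is bounded if the diameters of its members are uniformly bounded. $\mathfrak{C}_0$ is the class of bounded families; for an ordinal $\alpha>0$, $\mathfrak{C}_\alpha$ is the class of families $\mathcal{X}$ such that for every $R\in\mathbb{R}^{\mathbb{N}}$ there exist $\beta<\alpha$ and $\mathcal{Y}\in\mathfrak{C}_\beta$ with $\mathcal{X}\xrightarrow{R}\mathcal{Y}$. All subspaces carry the induced metric. *)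

From Stdlib Require Import Reals.
Open Scope R_scope.

Definition is_metric {M : Type} (d : M -> M -> R) : Prop :=
  (forall x y, 0 <= d x y) /\
  (forall x y, d x y = 0 <-> x = y) /\
  (forall x y, d x y = d y x) /\
  (forall x y z, d x z <= d x y + d y z).

(* Subspaces of the ambient metric space M are subsets (induced metric);
   a family is a collection of subspaces. *)
Definition subspace (M : Type) := M -> Prop.
Definition family (M : Type) := subspace M -> Prop.

Definition r_disjoint {M : Type} (d : M -> M -> R) (r : R) (F : family M) : Prop :=
  forall U U' x y, F U -> F U' -> U <> U' -> U x -> U' y -> d x y > r.

Definition bounded_family {M : Type} (d : M -> M -> R) (F : family M) : Prop :=
  exists D : R, forall U x y, F U -> U x -> U y -> d x y <= D.

Definition arrow {M : Type} (d : M -> M -> R) (Rs : nat -> R)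
    (Xf Yf : family M) : Prop :=
  exists k : nat, forall X0, Xf X0 ->
    exists Us : nat -> family M,
      (forall i, (1 <= i <= k)%nat ->
         (forall U, Us i U -> Yf U /\ (forall x, U x -> X0 x)) /\
         r_disjoint d (Rs i) (Us i)) /\
      (forall x, X0 x -> exists i U, (1 <= i <= k)%nat /\ Us i U /\ U x).

(* The classes C_alpha, indexed by the elements of a well-ordered type
   (O, lt); the bottom element plays the role of the ordinal 0.  This is
   the least predicate satisfying the defining recursion, which (lt being
   well-founded) is exactly the transfinite recursive definition. *)
Inductive inC {M : Type} (d : M -> M -> R) {O : Type} (lt : O -> O -> Prop)
  : O -> family M -> Prop :=
| inC_zero : forall (a : O) (F : family M),
    (forall b, ~ lt b a) -> bounded_family d F -> inC d lt a F
| inC_pos : forall (a : O) (F : family M),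
    (exists b, lt b a) ->
    (forall Rs : nat -> R, exists b, lt b a /\
        exists G : family M, inC d lt b G /\ arrow d Rs F G) ->
    inC d lt a F.

Definition well_order {O : Type} (lt : O -> O -> Prop) : Prop :=
  well_founded lt /\
  (forall a b c, lt a b -> lt b c -> lt a c) /\
  (forall a b, lt a b \/ a = b \/ lt b a).

(** Fix scales [Rs]. Decompose the family [{Y(r)}] along the first [k1] scales
    and the family [{X_i}] along the next [k2] ones, and only then choose [r]
    above those [k2] scales.  Since the pieces [X_i \ Y(r)] are [r]-disjoint,
    their decompositions assemble into one of their union, and together with
    the decomposition of [Y(r)] this decomposes [X] along [k1 + k2] scales into
    subspaces of members of a family of a lower class; the classes are closed
    under finite unions and passing to subspaces.  At the bottom level the
    argument is metric: an unbounded [X] contains three points pairwise further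
    apart than the bounds, and for [r] beyond their distances two of them lie
    in [Y(r)]. *)

From Stdlib Require Import Reals Lra Lia Classical ClassicalEpsilon.
Open Scope R_scope.

Section Decompositions.

Context {M : Type} (d : M -> M -> R).

Definition down (F : family M) : family M :=
  fun U => exists V, F V /\ (forall x, U x -> V x).

Definition family_union (F G : family M) : family M := fun U => F U \/ G U.

Definition bigcup (P : family M) : subspace M := fun x => exists T, P T /\ T x.

Definition shift (k : nat) (Rs : nat -> R) : nat -> R := fun j => Rs (k + j)%nat.

Definition decomposition (Rs : nat -> R) (k : nat) (Yf : family M)
    (X0 : subspace M) (Us : nat -> family M) : Prop :=
  (forall i, (1 <= i <= k)%nat ->
     (forall U, Us i U -> Yf U /\ (forall x, U x -> X0 x)) /\
     r_disjoint d (Rs i) (Us i)) /\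
  (forall x, X0 x -> exists i U, (1 <= i <= k)%nat /\ Us i U /\ U x).

Definition arrow_with (Rs : nat -> R) (k : nat) (Xf Yf : family M) : Prop :=
  forall X0, Xf X0 -> exists Us, decomposition Rs k Yf X0 Us.

Lemma arrow_arrow_with Rs (Xf Yf : family M) :
  arrow d Rs Xf Yf <-> exists k, arrow_with Rs k Xf Yf.
Proof. reflexivity. Qed.

Lemma arrow_refl Rs (F : family M) : arrow d Rs F F.
Proof.
  apply arrow_arrow_with. exists 1%nat. intros X0 HX0.
  exists (fun _ U => U = X0). split.
  - intros i _. split.
    + intros U ->. split; [exact HX0 | intros x Hx; exact Hx].
    + intros U U' x y -> -> Hne. contradiction (Hne eq_refl).
  - intros x Hx. exists 1%nat, X0. split; [lia | split; [reflexivity | exact Hx]].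
Qed.

Lemma decomposition_weaken Rs k (Yf Yf' : family M) X0 Us :
  (forall U, Yf U -> Yf' U) ->
  decomposition Rs k Yf X0 Us -> decomposition Rs k Yf' X0 Us.
Proof.
  intros HYf [Hparts Hcover]. split; [|exact Hcover].
  intros i Hi. destruct (Hparts i Hi) as [Hsub Hdisj]. split; [|exact Hdisj].
  intros U HU. destruct (Hsub U HU) as [HYU HUX]. split; [exact (HYf U HYU) | exact HUX].
Qed.

Lemma decomposition_le Rs k k' Yf X0 Us :
  (k <= k')%nat -> decomposition Rs k Yf X0 Us ->
  decomposition Rs k' Yf X0 (fun i U => (i <= k)%nat /\ Us i U).
Proof.
  intros Hk [Hparts Hcover]. split.
  - intros i Hi. destruct (Nat.le_gt_cases i k) as [Hik | Hik].
    + destruct (Hparts i (conj (proj1 Hi) Hik)) as [Hsub Hdisj]. split.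
      * intros U [_ HU]. exact (Hsub U HU).
      * intros U U' x y [_ HU] [_ HU']. exact (Hdisj U U' x y HU HU').
    + split; [intros U [Hik' _] | intros U U' x y [Hik' _]]; lia.
  - intros x Hx. destruct (Hcover x Hx) as [i [U [Hi [HU Ux]]]].
    exists i, U. repeat split; solve [lia | assumption].
Qed.

Lemma decomposition_restrict Rs k Yf X0 S Us :
  decomposition Rs k Yf X0 Us -> (forall x, S x -> X0 x) ->
  decomposition Rs k (down Yf) S
    (fun i U => exists V, Us i V /\ U = (fun x => V x /\ S x)).
Proof.
  intros [Hparts Hcover] HS. split.
  - intros i Hi. destruct (Hparts i Hi) as [Hsub Hdisj]. split.
    + intros U [V [HV ->]]. split.
      * exists V. split; [exact (proj1 (Hsub V HV)) | intros x [Vx _]; exact Vx].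
      * intros x [_ Sx]. exact Sx.
    + intros U U' x y [V [HV ->]] [V' [HV' ->]] Hne [Vx _] [Vy _].
      apply (Hdisj V V' x y HV HV'); [intros <-; apply Hne; reflexivity | exact Vx | exact Vy].
  - intros x Sx. destruct (Hcover x (HS x Sx)) as [i [V [Hi [HV Vx]]]].
    exists i, (fun y => V y /\ S y). split; [exact Hi|].
    split; [exists V; split; [exact HV | reflexivity] | split; assumption].
Qed.

Lemma decomposition_cat Rs k1 k2 Yf1 Yf2 A B Us1 Us2 :
  decomposition Rs k1 Yf1 A Us1 ->
  decomposition (shift k1 Rs) k2 Yf2 B Us2 ->
  decomposition Rs (k1 + k2) (family_union Yf1 Yf2) (fun x => A x \/ B x)
    (fun i => if (i <=? k1)%nat then Us1 i else Us2 (i - k1)%nat).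
Proof.
  intros [Hparts1 Hcover1] [Hparts2 Hcover2]. split.
  - intros i Hi. destruct (Nat.leb_spec i k1) as [Hik | Hik].
    + destruct (Hparts1 i (conj (proj1 Hi) Hik)) as [Hsub Hdisj]. split; [|exact Hdisj].
      intros U HU. destruct (Hsub U HU) as [HYU HUA].
      split; [left; exact HYU | intros x Ux; left; exact (HUA x Ux)].
    + destruct (Hparts2 (i - k1)%nat ltac:(lia)) as [Hsub Hdisj]. split.
      * intros U HU. destruct (Hsub U HU) as [HYU HUB].
        split; [right; exact HYU | intros x Ux; right; exact (HUB x Ux)].
      * unfold shift in Hdisj. replace (k1 + (i - k1))%nat with i in Hdisj by lia.
        exact Hdisj.
  - intros x [Ax | Bx].
    + destruct (Hcover1 x Ax) as [i [U [Hi [HU Ux]]]]. exists i, U.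
      rewrite (proj2 (Nat.leb_le i k1) (proj2 Hi)). repeat split; solve [lia | assumption].
    + destruct (Hcover2 x Bx) as [j [U [Hj [HU Ux]]]]. exists (k1 + j)%nat, U.
      rewrite (proj2 (Nat.leb_gt (k1 + j) k1) ltac:(lia)).
      replace (k1 + j - k1)%nat with j by lia. repeat split; solve [lia | assumption].
Qed.

Lemma decomposition_bigcup Rs k r Yf (P : family M) :
  r_disjoint d r P -> (forall i, (1 <= i <= k)%nat -> Rs i <= r) ->
  (forall T, P T -> exists Us, decomposition Rs k Yf T Us) ->
  exists Us, decomposition Rs k Yf (bigcup P) Us.
Proof.
  intros HP Hr Hdec.
  destruct (choice (fun T Us => P T -> decomposition Rs k Yf T Us)) as [UsOf HUsOf].
  { intros T. destruct (classic (P T)) as [PT | nPT].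
    - destruct (Hdec T PT) as [Us HUs]. exists Us. intros _. exact HUs.
    - exists (fun _ _ => False). intros PT. contradiction. }
  exists (fun i V => exists T, P T /\ UsOf T i V). split.
  - intros i Hi. split.
    + intros V [T [PT HV]]. destruct (proj1 (HUsOf T PT) i Hi) as [Hsub _].
      destruct (Hsub V HV) as [HYV HVT].
      split; [exact HYV | intros x Vx; exists T; split; [exact PT | exact (HVT x Vx)]].
    + intros V V' x y [T [PT HV]] [T' [PT' HV']] Hne Vx Vy.
      destruct (proj1 (HUsOf T PT) i Hi) as [Hsub Hdisj].
      destruct (classic (T = T')) as [<- | HTT].
      * exact (Hdisj V V' x y HV HV' Hne Vx Vy).
      * destruct (proj1 (HUsOf T' PT') i Hi) as [Hsub' _].
        pose proof (HP T T' x y PT PT' HTT (proj2 (Hsub V HV) x Vx) (proj2 (Hsub' V' HV') y Vy)).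
        pose proof (Hr i Hi). lra.
  - intros x [T [PT Tx]]. destruct (proj2 (HUsOf T PT) x Tx) as [i [V [Hi [HV Vx]]]].
    exists i, V. split; [exact Hi|]. split; [exists T; split; assumption | exact Vx].
Qed.

Lemma arrow_with_down Rs k (F F' Yf : family M) :
  arrow_with Rs k F Yf -> (forall U, F' U -> down F U) ->
  arrow_with Rs k F' (down Yf).
Proof.
  intros HF HF' U HU. destruct (HF' U HU) as [V [HV HUV]].
  destruct (HF V HV) as [Us HUs].
  eexists. exact (decomposition_restrict _ _ _ _ _ _ HUs HUV).
Qed.

Lemma arrow_union Rs (F G F1 G1 : family M) :
  arrow d Rs F F1 -> arrow d Rs G G1 ->
  arrow d Rs (family_union F G) (family_union F1 G1).
Proof.
  intros [k1 HF] [k2 HG]. apply arrow_arrow_with. exists (Nat.max k1 k2).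
  intros X0 [HX0 | HX0].
  - destruct (HF X0 HX0) as [Us HUs]. eexists.
    apply (decomposition_weaken _ _ F1); [intros U HU; left; exact HU|].
    apply (decomposition_le _ k1); [lia | exact HUs].
  - destruct (HG X0 HX0) as [Us HUs]. eexists.
    apply (decomposition_weaken _ _ G1); [intros U HU; right; exact HU|].
    apply (decomposition_le _ k2); [lia | exact HUs].
Qed.

Lemma bounded_down (F : family M) : bounded_family d F -> bounded_family d (down F).
Proof.
  intros [D HD]. exists D. intros U x y [V [HV HUV]] Ux Uy.
  exact (HD V x y HV (HUV x Ux) (HUV y Uy)).
Qed.

Lemma bounded_union (F G : family M) :
  bounded_family d F -> bounded_family d G -> bounded_family d (family_union F G).
Proof.
  intros [D1 HD1] [D2 HD2]. exists (Rmax D1 D2). intros U x y [HU | HU] Ux Uy.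
  - eapply Rle_trans; [exact (HD1 U x y HU Ux Uy) | apply Rmax_l].
  - eapply Rle_trans; [exact (HD2 U x y HU Ux Uy) | apply Rmax_r].
Qed.

End Decompositions.

Section Classes.

Context {M : Type} (d : M -> M -> R) {O : Type} (lt : O -> O -> Prop).
Hypothesis lt_well_order : well_order lt.

Lemma upper_bound_lt a b c :
  lt a c -> lt b c -> exists e, lt e c /\ (a = e \/ lt a e) /\ (b = e \/ lt b e).
Proof.
  intros Hac Hbc. destruct lt_well_order as [_ [_ Htot]].
  destruct (Htot a b) as [Hab | [<- | Hba]].
  - exists b. auto.
  - exists a. auto.
  - exists a. auto.
Qed.

Lemma inC_bounded a (F : family M) :
  (forall b, ~ lt b a) -> inC d lt a F -> bounded_family d F.
Proof.
  intros Ha HF. destruct HF as [a F _ HF | a F [b Hb] _]; [exact HF | contradiction (Ha b Hb)].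
Qed.

Lemma inC_arrow a (F : family M) :
  (exists b, lt b a) -> inC d lt a F ->
  forall Rs, exists b, lt b a /\ exists G, inC d lt b G /\ arrow d Rs F G.
Proof.
  intros [b Hb] HF. destruct HF as [a F Ha _ | a F _ HF]; [contradiction (Ha b Hb) | exact HF].
Qed.

Lemma inC_mono a c (F : family M) :
  (a = c \/ lt a c) -> inC d lt a F -> inC d lt c F.
Proof.
  intros [<- | Hac] HF; [exact HF|].
  destruct lt_well_order as [_ [Htrans _]].
  apply inC_pos; [exists a; exact Hac|]. intros Rs.
  destruct (classic (exists b, lt b a)) as [Ha | Ha].
  - destruct (inC_arrow a F Ha HF Rs) as [b [Hba HG]].
    exists b. split; [exact (Htrans _ _ _ Hba Hac) | exact HG].
  - exists a. split; [exact Hac|]. exists F. split; [exact HF | apply arrow_refl].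
Qed.

Lemma inC_down a (F : family M) : inC d lt a F -> inC d lt a (down F).
Proof.
  revert F. induction a as [a IH] using (well_founded_induction (proj1 lt_well_order)).
  intros F HF. destruct (classic (exists b, lt b a)) as [Ha | Ha].
  - apply inC_pos; [exact Ha|]. intros Rs.
    destruct (inC_arrow a F Ha HF Rs) as [b [Hba [G [HG [k Hk]]]]].
    exists b. split; [exact Hba|]. exists (down G). split; [exact (IH b Hba G HG)|].
    exists k. exact (arrow_with_down d Rs k F (down F) G Hk (fun U HU => HU)).
  - pose proof (not_ex_all_not _ _ Ha) as Hmin.
    apply inC_zero; [exact Hmin|]. exact (bounded_down d F (inC_bounded a F Hmin HF)).
Qed.

Lemma inC_union c (F G : family M) :
  inC d lt c F -> inC d lt c G -> inC d lt c (family_union F G).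
Proof.
  revert F G. induction c as [c IH] using (well_founded_induction (proj1 lt_well_order)).
  intros F G HF HG. destruct (classic (exists b, lt b c)) as [Hc | Hc].
  - apply inC_pos; [exact Hc|]. intros Rs.
    destruct (inC_arrow c F Hc HF Rs) as [b1 [Hb1 [F1 [HF1 HA1]]]].
    destruct (inC_arrow c G Hc HG Rs) as [b2 [Hb2 [G1 [HG1 HA2]]]].
    destruct (upper_bound_lt b1 b2 c Hb1 Hb2) as [e [He [Hb1e Hb2e]]].
    exists e. split; [exact He|]. exists (family_union F1 G1).
    split; [|exact (arrow_union d Rs F G F1 G1 HA1 HA2)].
    apply IH; [exact He | exact (inC_mono b1 e F1 Hb1e HF1) | exact (inC_mono b2 e G1 Hb2e HG1)].
  - pose proof (not_ex_all_not _ _ Hc) as Hmin.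
    apply inC_zero; [exact Hmin|].
    exact (bounded_union d F G (inC_bounded c F Hmin HF) (inC_bounded c G Hmin HG)).
Qed.

End Classes.

Lemma finite_upper_bound (f : nat -> R) (k : nat) :
  exists r, 0 < r /\ forall j, (1 <= j <= k)%nat -> f j <= r.
Proof.
  induction k as [|k [r [Hr Hbound]]].
  - exists 1. split; [lra | intros j Hj; lia].
  - exists (Rmax r (f (S k))). split; [eapply Rlt_le_trans; [exact Hr | apply Rmax_l]|].
    intros j Hj. destruct (Nat.eq_dec j (S k)) as [-> | Hne]; [apply Rmax_r|].
    eapply Rle_trans; [apply Hbound; lia | apply Rmax_l].
Qed.

Lemma bounded_of_no_far_triple {M : Type} (d : M -> M -> R) (K : R) :
  is_metric d ->
  (forall u v w, d u v > K -> d v w > K -> d u w > K -> False) ->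
  bounded_family d (fun U => U = (fun _ : M => True)).
Proof.
  intros [Hnn [_ [Hsym Htri]]] Hno.
  destruct (classic (exists x0 x1, d x0 x1 > K)) as [[x0 [x1 H01]] | Hnone].
  - assert (Hnear : forall u, d u x0 <= K + d x0 x1).
    { intros u. pose proof (Hnn x0 x1).
      destruct (Rle_or_lt (d u x0) K) as [H0 | H0]; [lra|].
      destruct (Rle_or_lt (d u x1) K) as [H1 | H1].
      - pose proof (Htri u x1 x0). rewrite (Hsym x1 x0) in *. lra.
      - exfalso. apply (Hno x0 x1 u H01); rewrite Hsym; assumption. }
    exists (2 * (K + d x0 x1)). intros U x y _ _ _.
    pose proof (Htri x x0 y). pose proof (Hnear x). pose proof (Hnear y).
    rewrite (Hsym x0 y) in *. lra.
  - exists K. intros U x y _ _ _. apply Rnot_gt_le. intros Hxy.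
    apply Hnone. exists x, y. exact Hxy.
Qed.

Section Theorem4p3.

Context {M : Type} (d : M -> M -> R) {I : Type} (Xs : I -> subspace M)
  (Y : R -> subspace M).

Definition pieces (r : R) : family M :=
  fun U => exists i, U = (fun x => Xs i x /\ ~ Y r x).

Hypothesis Xs_cover : forall x, exists i, Xs i x.
Hypothesis pieces_disjoint : forall r, 0 < r -> r_disjoint d r (pieces r).

Lemma far_pair_meets_Y D r p q :
  (forall U x y, (exists i, U = Xs i) -> U x -> U y -> d x y <= D) ->
  0 < r -> D < d p q <= r -> Y r p \/ Y r q.
Proof.
  intros HD Hr Hpq. apply NNPP. intros HY. apply not_or_and in HY as [Hp Hq].
  destruct (Xs_cover p) as [i Hi]. destruct (Xs_cover q) as [j Hj].
  destruct (classic ((fun x => Xs i x /\ ~ Y r x) = (fun x => Xs j x /\ ~ Y r x)))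
    as [Eij | Eij].
  - assert (Hqi : Xs i q /\ ~ Y r q).
    { change ((fun x => Xs i x /\ ~ Y r x) q). rewrite Eij. split; assumption. }
    pose proof (HD (Xs i) p q (ex_intro _ i eq_refl) Hi (proj1 Hqi)). lra.
  - pose proof (pieces_disjoint r Hr _ _ p q (ex_intro _ i eq_refl) (ex_intro _ j eq_refl)
      Eij (conj Hi Hp) (conj Hj Hq)). lra.
Qed.

Lemma bounded_whole :
  is_metric d ->
  bounded_family d (fun U => exists i, U = Xs i) ->
  bounded_family d (fun U => exists r, 0 < r /\ U = Y r) ->
  bounded_family d (fun U => U = (fun _ : M => True)).
Proof.
  intros Hmet [D1 HD1] [D2 HD2]. pose proof Hmet as [Hnn _].
  apply (bounded_of_no_far_triple d (Rmax D1 D2) Hmet).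
  intros u v w Huv Hvw Huw.
  pose proof (Rmax_l D1 D2). pose proof (Rmax_r D1 D2).
  set (r := d u v + d v w + d u w + 1).
  pose proof (Hnn u v). pose proof (Hnn v w). pose proof (Hnn u w).
  assert (Hr : 0 < r) by (unfold r; lra).
  assert (HY : forall p q, Y r p -> Y r q -> d p q <= Rmax D1 D2).
  { intros p q Hp Hq. pose proof (HD2 (Y r) p q (ex_intro _ r (conj Hr eq_refl)) Hp Hq). lra. }
  (* two of the three points lie in [Y r] *)
  destruct (far_pair_meets_Y D1 r u v HD1 Hr ltac:(unfold r; lra));
  destruct (far_pair_meets_Y D1 r v w HD1 Hr ltac:(unfold r; lra));
  destruct (far_pair_meets_Y D1 r u w HD1 Hr ltac:(unfold r; lra));
  first [ pose proof (HY u v ltac:(assumption) ltac:(assumption)); lra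
        | pose proof (HY v w ltac:(assumption) ltac:(assumption)); lra
        | pose proof (HY u w ltac:(assumption) ltac:(assumption)); lra ].
Qed.

Lemma arrow_with_whole Rs k1 k2 (Fy Fx : family M) :
  arrow_with d Rs k1 (fun U => exists r, 0 < r /\ U = Y r) Fy ->
  arrow_with d (shift k1 Rs) k2 (fun U => exists i, U = Xs i) Fx ->
  arrow_with d Rs (k1 + k2) (fun U => U = (fun _ : M => True))
    (down (family_union Fy (down Fx))).
Proof.
  intros HY HX U ->.
  (* [r] is chosen after [k2], so the [r]-disjointness of the pieces separates
     them at all the scales [shift k1 Rs 1, ..., shift k1 Rs k2] *)
  destruct (finite_upper_bound (shift k1 Rs) k2) as [r [Hr Hrk]].
  destruct (HY (Y r) (ex_intro _ r (conj Hr eq_refl))) as [UsY HUsY].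
  destruct (decomposition_bigcup d (shift k1 Rs) k2 r (down Fx) (pieces r)
              (pieces_disjoint r Hr) Hrk) as [UsP HUsP].
  { intros T [i ->]. destruct (HX (Xs i) (ex_intro _ i eq_refl)) as [Us HUs].
    eexists. apply (decomposition_restrict d _ _ _ _ _ _ HUs). intros x [Xx _]. exact Xx. }
  eexists. apply (decomposition_restrict d _ _ _ (fun x => Y r x \/ bigcup (pieces r) x)).
  - exact (decomposition_cat d _ _ _ _ _ _ _ _ _ HUsY HUsP).
  - intros x _. destruct (classic (Y r x)) as [Yx | nYx]; [left; exact Yx | right].
    destruct (Xs_cover x) as [i Xix]. exists (fun y => Xs i y /\ ~ Y r y).
    split; [exists i; reflexivity | split; assumption].
Qed.

End Theorem4p3.

Theorem theorem4p3 (O : Type) (lt : O -> O -> Prop) (alpha : O)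
  (M : Type) (d : M -> M -> R) (I : Type) (Xs : I -> subspace M)
  (Y : R -> subspace M) :
  well_order lt ->
  is_metric d ->
  (forall x : M, exists i, Xs i x) ->
  inC d lt alpha (fun U => exists i, U = Xs i) ->
  (forall r, 0 < r ->
     r_disjoint d r (fun U => exists i, U = (fun x => Xs i x /\ ~ Y r x))) ->
  inC d lt alpha (fun U => exists r, 0 < r /\ U = Y r) ->
  inC d lt alpha (fun U => U = (fun _ : M => True)).
Proof.
  intros Hwo Hmet Hcov HX Hdisj HY.
  destruct (classic (exists b, lt b alpha)) as [Ha | Ha].
  - apply inC_pos; [exact Ha|]. intros Rs.
    destruct (inC_arrow d lt alpha _ Ha HY Rs) as [b1 [Hb1 [Fy [HFy [k1 HY1]]]]].
    destruct (inC_arrow d lt alpha _ Ha HX (shift k1 Rs)) as [b2 [Hb2 [Fx [HFx [k2 HX2]]]]].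
    destruct (upper_bound_lt lt Hwo b1 b2 alpha Hb1 Hb2) as [e [He [Hb1e Hb2e]]].
    exists e. split; [exact He|]. exists (down (family_union Fy (down Fx))). split.
    + apply inC_down, inC_union; [exact Hwo | exact Hwo | |].
      * exact (inC_mono d lt Hwo b1 e Fy Hb1e HFy).
      * apply inC_down; [exact Hwo|]. exact (inC_mono d lt Hwo b2 e Fx Hb2e HFx).
    + exists (k1 + k2)%nat. exact (arrow_with_whole d Xs Y Hcov Hdisj Rs k1 k2 Fy Fx HY1 HX2).
  - pose proof (not_ex_all_not _ _ Ha) as Hmin. apply inC_zero; [exact Hmin|].
    exact (bounded_whole d Xs Y Hcov Hdisj Hmet (inC_bounded d lt alpha _ Hmin HX)
             (inC_bounded d lt alpha _ Hmin HY)).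
Qed.
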